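(* Let $d\in\mathbb{D}$ be such that, for every formula $\varphi$ of Hennessy–Milner logic, $(\mathbb{D},d)\models^c\varphi$ implies $(\mathbb{D},d)\models^a\varphi$. Then $d\in\max(\mathbb{D})$.
   Context: Fix a finite set $\mathrm{Act}$ of events. For a dcpo $D$, $K(D)$ denotes its compact elements; a bifinite (SFP) domain is an algebraic dcpo in which for each finite $F\subseteq K(D)$ iterated minimal-upper-bound sets are finite and in $K(D)$ and every upper bound of $F$ is above a minimal upper bound. Scott topology: sets $U={\uparrow}(U\cap K(D))$; Lawson topology generated by ${\uparrow}k\setminus{\uparrow}l$, $k,l\in K(D)$. Mixed powerdomain $\mathcal{M}(D)$: pairs $(L,U)$, $L$ Scott-closed, $U$ Lawson-closed upper, $L={\downarrow}(L\cap U)$, ordered by $L\subseteq L'$ and $U'\subseteq U$. $\mathbb{D}$ is the initial solution over bifinite domains of $\mathbb{D}\cong\prod_{\alpha\in\mathrm{Act}}\mathcal{M}(\mathbb{D})$, $d=((L^d_\alpha,U^d_\alpha))_\alpha$, viewed as a mixed transition system $(\mathbb{D},\mathbb{R}^a,\mathbb{R}^c)$ with $(d,\alpha,d')\in\mathbb{R}^a$ iff $d'\in L^d_\alpha$ and $(d,\alpha,d')\in\mathbb{R}^c$ iff $d'\in U^d_\alpha$. $\max(\mathbb{D})$ is the set of maximal elements. Hennessy–Milner logic: $\varphi::=tt\mid\neg\varphi\mid\langle\alpha\rangle\varphi\mid\varphi\wedge\varphi$. For $m\in\{a,c\}$ ($\neg a=c$, $\neg c=a$): $(\mathbb{D},d)\models^m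 tt$; $(\mathbb{D},d)\models^m\neg\varphi$ iff not $(\mathbb{D},d)\models^{\neg m}\varphi$; $(\mathbb{D},d)\models^m\langle\alpha\rangle\varphi$ iff $(\mathbb{D},d')\models^m\varphi$ for some $(d,\alpha,d')\in\mathbb{R}^m$; $\models^m\varphi\wedge\psi$ iff $\models^m\varphi$ and $\models^m\psi$. *)

From Stdlib Require Import List.
Import ListNotations.

Section Domains.
Variable D : Type.
Variable le : D -> D -> Prop.

Definition set_eq (A B : D -> Prop) : Prop := forall x, A x <-> B x.

Definition is_partial_order : Prop :=
  (forall x, le x x) /\
  (forall x y z, le x y -> le y z -> le x z) /\
  (forall x y, le x y -> le y x -> x = y).

Definition upper_bound (S : D -> Prop) (u : D) : Prop := forall x, S x -> le x u.

Definition is_lub (S : D -> Prop) (s : D) : Prop :=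
  upper_bound S s /\ forall u, upper_bound S u -> le s u.

Definition directed (S : D -> Prop) : Prop :=
  (exists x, S x) /\
  (forall x y, S x -> S y -> exists z, S z /\ le x z /\ le y z).

Definition is_dcpo : Prop := forall S, directed S -> exists s, is_lub S s.

Definition compact (k : D) : Prop :=
  forall S s, directed S -> is_lub S s -> le k s -> exists x, S x /\ le k x.

Definition is_algebraic : Prop :=
  is_dcpo /\
  forall x, directed (fun k => compact k /\ le k x) /\
            is_lub (fun k => compact k /\ le k x) x.

Definition finite_set (P : D -> Prop) : Prop :=
  exists l : list D, forall x, P x -> In x l.

Definition ub_list (F : list D) (u : D) : Prop := forall x, In x F -> le x u.

Definition mub (F : list D) (m : D) : Prop :=
  ub_list F m /\ forall u, ub_list F u -> le u m -> u = m.

Definition mub_closure (F : list D) (x : D) : Prop :=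
  forall C : D -> Prop,
    (forall y, In y F -> C y) ->
    (forall (G : list D) m, (forall y, In y G -> C y) -> mub G m -> C m) ->
    C x.

Definition is_bifinite : Prop :=
  is_algebraic /\
  forall F : list D, (forall x, In x F -> compact x) ->
    (forall u, ub_list F u -> exists m, mub F m /\ le m u) /\
    finite_set (mub_closure F) /\
    (forall x, mub_closure F x -> compact x).

Definition scott_open (U : D -> Prop) : Prop :=
  forall x, U x <-> exists k, compact k /\ U k /\ le k x.

Definition scott_closed (L : D -> Prop) : Prop := scott_open (fun x => ~ L x).

(* Lawson topology generated by the sets up k \ up l, k l in K(D):
   open sets are unions of finite intersections of generators *)
Definition lawson_basic (l : list (D * D)) (y : D) : Prop :=
  forall p, In p l -> le (fst p) y /\ ~ le (snd p) y.

Definition lawson_open (O : D -> Prop) : Prop :=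
  forall x, O x -> exists l : list (D * D),
    (forall p, In p l -> compact (fst p) /\ compact (snd p)) /\
    lawson_basic l x /\ (forall y, lawson_basic l y -> O y).

Definition lawson_closed (U : D -> Prop) : Prop := lawson_open (fun x => ~ U x).

Definition upper_set (U : D -> Prop) : Prop := forall x y, U x -> le x y -> U y.

Definition mixed_pair : Type := ((D -> Prop) * (D -> Prop))%type.

Definition is_mixed (p : mixed_pair) : Prop :=
  scott_closed (fst p) /\ lawson_closed (snd p) /\ upper_set (snd p) /\
  forall x, fst p x <-> exists y, fst p y /\ snd p y /\ le x y.

Definition mixed_le (p q : mixed_pair) : Prop :=
  (forall x, fst p x -> fst q x) /\ (forall x, snd q x -> snd p x).

Definition mixed_eq (p q : mixed_pair) : Prop :=
  set_eq (fst p) (fst q) /\ set_eq (snd p) (snd q).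

Definition scott_continuous (f : D -> D) : Prop :=
  (forall x y, le x y -> le (f x) (f y)) /\
  forall S s, directed S -> is_lub S s -> is_lub (fun y => exists x, S x /\ y = f x) (f s).

Definition scott_closure (A : D -> Prop) (x : D) : Prop :=
  forall C, scott_closed C -> (forall y, A y -> C y) -> C x.

Definition mixed_map (f : D -> D) (p : mixed_pair) : mixed_pair :=
  (scott_closure (fun y => exists x, fst p x /\ le y (f x)),
   fun y => exists x, snd p x /\ le (f x) y).

End Domains.

Definition finite_type (A : Type) : Prop := exists l : list A, forall a, In a l.

(* Initiality is expressed through the
   (equivalent, Pitts/Smyth-Plotkin) minimal-invariant property: the identity
   is the least fixed point of  f |-> phi^-1 o prod_alpha M(f) o phi  on
   continuous self-maps. *)
Definition initial_solution (Act : Type) (D : Type) (le : D -> D -> Prop)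
  (phi : D -> Act -> mixed_pair D) : Prop :=
  is_partial_order D le /\ is_bifinite D le /\
  (forall x a, is_mixed D le (phi x a)) /\
  (forall x y, le x y <-> forall a, mixed_le D (phi x a) (phi y a)) /\
  (forall t : Act -> mixed_pair D, (forall a, is_mixed D le (t a)) ->
     exists x, forall a, mixed_eq D (phi x a) (t a)) /\
  (forall f : D -> D, scott_continuous D le f ->
     (forall x a, mixed_eq D (phi (f x) a) (mixed_map D le f (phi x a))) ->
     forall x, le x (f x)).

Inductive hml (Act : Type) : Type :=
| HTrue : hml Act
| HNeg : hml Act -> hml Act
| HDia : Act -> hml Act -> hml Act
| HAnd : hml Act -> hml Act -> hml Act.
Arguments HTrue {Act}.
Arguments HNeg {Act} _.
Arguments HDia {Act} _ _.
Arguments HAnd {Act} _ _.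

Inductive mode : Type := ModeA | ModeC.
Definition neg_mode (m : mode) : mode :=
  match m with ModeA => ModeC | ModeC => ModeA end.

Definition trans {Act D : Type} (phi : D -> Act -> mixed_pair D)
  (m : mode) (d : D) (a : Act) (d' : D) : Prop :=
  match m with
  | ModeA => fst (phi d a) d'
  | ModeC => snd (phi d a) d'
  end.

Fixpoint sat {Act D : Type} (phi : D -> Act -> mixed_pair D)
  (m : mode) (d : D) (f : hml Act) : Prop :=
  match f with
  | HTrue => True
  | HNeg g => ~ sat phi (neg_mode m) d g
  | HDia a g => exists d', trans phi m d a d' /\ sat phi m d' g
  | HAnd g h => sat phi m d g /\ sat phi m d h
  end.

Definition maximal {D : Type} (le : D -> D -> Prop) (d : D) : Prop :=
  forall y, le d y -> y = d.

(** If d ⊑ y, then every approximation [approx n y] of y, where [approx 0] is constantly ⊥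
    and [approx (n+1) = lift (approx n)] with [lift f = φ⁻¹ ∘ ΠM(f) ∘ φ], takes values in a
    finite set because Act is finite, and is therefore described by a characteristic formula χ:
    w ⊨ᵃ χ iff [approx n y] ⊑ w.  Since ⊨ᵃ implies ⊨ᶜ and ⊨ᶜ is antitone, y ⊨ᵃ χ gives d ⊨ᶜ χ,
    hence d ⊨ᵃ χ by hypothesis, i.e. [approx n y] ⊑ d.  The supremum of the approximations is a
    fixed point of [lift], so it lies above the identity by minimal invariance, and y ⊑ d
    follows.  That M(f) preserves mixed pairs and that the supremum is a fixed point both rest
    on the compactness of the Lawson topology, which comes from Zorn's lemma applied to
    families of closed sets with the finite intersection property. *)

From Stdlib Require Import List Classical ClassicalEpsilon.
From Stdlib Require Import FunctionalExtensionality PropExtensionality Lia.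
From mathcomp Require classical_sets.
Import ListNotations.

Lemma finite_intersections_combine {X I : Type} (M : (X -> Prop) -> Prop)
  (Q : I -> X -> Prop) (is : list I) :
  (forall i, In i is -> exists l, (forall A, In A l -> M A) /\
     forall z, (forall A, In A l -> A z) -> Q i z) ->
  exists l, (forall A, In A l -> M A) /\
     forall z, (forall A, In A l -> A z) -> forall i, In i is -> Q i z.
Proof.
  induction is as [|i is IH]; intro H.
  - exists []. split; [intros _ []|intros z _ i []].
  - destruct (H i (or_introl eq_refl)) as [l1 [Hl1 HQ1]].
    destruct IH as [l2 [Hl2 HQ2]]; [intros j Hj; apply H; right; exact Hj|].
    exists (l1 ++ l2). split.
    + intros A HA. apply in_app_or in HA. destruct HA; auto.
    + intros z Hz j [<-|Hj].
      * apply HQ1. intros A HA. apply Hz. apply in_or_app. auto.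
      * apply HQ2; auto. intros A HA. apply Hz. apply in_or_app. auto.
Qed.

Lemma list_in_chain_union {X : Type} (F : X -> Prop) (C : (X -> Prop) -> Prop) l :
  (forall G H, C G -> C H -> (forall x, G x -> H x) \/ (forall x, H x -> G x)) ->
  (forall x, In x l -> F x \/ exists2 G, C G & G x) ->
  (forall x, In x l -> F x) \/ exists G, C G /\ forall x, In x l -> F x \/ G x.
Proof.
  intro HC. induction l as [|x l IH]; intro Hl; [left; intros _ []|].
  assert (Hx := Hl x (or_introl eq_refl)).
  destruct IH as [IH|[G [CG IH]]]; [intros; apply Hl; right; auto|..];
    destruct Hx as [Fx|[H CH Hx]].
  - left. intros y [<-|Hy]; auto.
  - right. exists H. split; [exact CH|]. intros y [<-|Hy]; auto.
  - right. exists G. split; [exact CG|]. intros y [<-|Hy]; auto.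
  - destruct (HC G H CG CH) as [HGH|HHG].
    + right. exists H. split; [exact CH|]. intros y [<-|Hy]; [auto|].
      destruct (IH y Hy); auto.
    + right. exists G. split; [exact CG|]. intros y [<-|Hy]; auto.
Qed.

Lemma list_split_off {X : Type} (M : X -> Prop) (b : X) l :
  (forall x, In x l -> M x \/ x = b) ->
  exists l', (forall x, In x l' -> M x) /\ forall x, In x l -> In x l' \/ x = b.
Proof.
  induction l as [|x l IH]; intro Hl; [exists []; split; intros _ []|].
  destruct IH as [l' [Hl' Hcov]]; [intros; apply Hl; right; auto|].
  destruct (Hl x (or_introl eq_refl)) as [Mx| ->].
  - exists (x :: l'). split; [intros y [<-|Hy]; auto|].
    intros y [<-|Hy]; [left; left; auto|]. destruct (Hcov y Hy); [left; right|right]; auto.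
  - exists l'. split; [exact Hl'|]. intros y [<-|Hy]; auto.
Qed.

Lemma list_indices {X I : Type} (A0 : X) (Q : I -> Prop) (F : I -> X) l :
  (forall B, In B l -> B = A0 \/ exists i, Q i /\ B = F i) ->
  exists is, (forall i, In i is -> Q i) /\
    forall B, In B l -> B = A0 \/ exists i, In i is /\ B = F i.
Proof.
  induction l as [|B l IH]; intro Hl; [exists []; split; intros _ []|].
  destruct IH as [is [His Hcov]]; [intros; apply Hl; right; auto|].
  destruct (Hl B (or_introl eq_refl)) as [-> |[i [Qi ->]]].
  - exists is. split; [exact His|]. intros B' [<-|HB']; auto.
  - exists (i :: is). split; [intros j [<-|Hj]; auto|].
    intros B' [<-|HB']; [right; exists i; split; [left|]; auto|].
    destruct (Hcov B' HB') as [h|[j [Hj ->]]]; [auto|right; exists j; split; [right|]; auto].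
Qed.

Lemma mixed_pair_ext {D : Type} (p q : mixed_pair D) : mixed_eq D p q -> p = q.
Proof.
  destruct p as [p1 p2], q as [q1 q2]. intros [H1 H2]. simpl in *.
  f_equal; apply functional_extensionality; intro y; apply propositional_extensionality;
    [apply H1|apply H2].
Qed.

Lemma initial_solution_onto Act D le (phi : D -> Act -> mixed_pair D) :
  initial_solution Act D le phi -> forall t : Act -> mixed_pair D,
  (forall a, is_mixed D le (t a)) -> exists x, forall a, phi x a = t a.
Proof.
  intros [_ [_ [_ [_ [Honto _]]]]] t Ht. destruct (Honto t Ht) as [x Hx].
  exists x. intro a. apply mixed_pair_ext, Hx.
Qed.

Lemma finite_image_of_finite_tests {X Y C : Type} (g : X -> Y) (R : X -> C -> Prop)
  (cs : list C) :
  (forall x y, (forall c, In c cs -> (R x c <-> R y c)) -> g x = g y) ->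
  exists l, forall x, In (g x) l.
Proof.
  revert X g R. induction cs as [|c cs IH]; intros X g R Hg.
  - destruct (classic (inhabited X)) as [[x0]|HX].
    + exists [g x0]. intro x. left. apply Hg. intros _ [].
    + exists []. intro x. apply HX. constructor. exact x.
  - destruct (IH {x | R x c} (fun x => g (proj1_sig x)) (fun x => R (proj1_sig x)))
      as [l1 Hl1].
    { intros [x Hx] [y Hy] Hxy. simpl in *. apply Hg.
      intros c' [<-|Hc']; [tauto|exact (Hxy c' Hc')]. }
    destruct (IH {x | ~ R x c} (fun x => g (proj1_sig x)) (fun x => R (proj1_sig x)))
      as [l2 Hl2].
    { intros [x Hx] [y Hy] Hxy. simpl in *. apply Hg.
      intros c' [<-|Hc']; [tauto|exact (Hxy c' Hc')]. }
    exists (l1 ++ l2). intro x. apply in_or_app. destruct (classic (R x c)) as [Hx|Hx].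
    + left. exact (Hl1 (exist _ x Hx)).
    + right. exact (Hl2 (exist _ x Hx)).
Qed.

Lemma list_nat_bound (ns : list nat) : exists N, forall n, In n ns -> n <= N.
Proof.
  induction ns as [|n ns [N HN]]; [exists 0; intros _ []|].
  exists (max n N). intros m [<-|Hm]; [lia|]. specialize (HN m Hm). lia.
Qed.

Section DomainTheory.
Variables (D : Type) (le : D -> D -> Prop).
Hypothesis le_po : is_partial_order D le.
Hypothesis le_bifinite : is_bifinite D le.

Lemma le_refl x : le x x.
Proof. apply le_po. Qed.

Lemma le_trans x y z : le x y -> le y z -> le x z.
Proof. apply le_po. Qed.

Lemma le_antisym x y : le x y -> le y x -> x = y.
Proof. apply le_po. Qed.

Lemma dcpo_lub S : directed D le S -> exists s, is_lub D le S s.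
Proof. apply le_bifinite. Qed.

Lemma compacts_below_directed x : directed D le (fun k => compact D le k /\ le k x).
Proof. apply le_bifinite. Qed.

Lemma compacts_below_lub x : is_lub D le (fun k => compact D le k /\ le k x) x.
Proof. apply le_bifinite. Qed.

Lemma le_of_compacts_below x y :
  (forall k, compact D le k -> le k x -> le k y) -> le x y.
Proof. intro H. apply (compacts_below_lub x). intros k [Hk Hkx]. auto. Qed.

Lemma not_le_compact x y : ~ le x y -> exists k, compact D le k /\ le k x /\ ~ le k y.
Proof.
  intro Hxy. apply NNPP. intro Hno. apply Hxy. apply le_of_compacts_below.
  intros k Hk Hkx. apply NNPP. intro Hky. apply Hno. eauto.
Qed.

Lemma directed_ub_list S xs : directed D le S -> (forall x, In x xs -> S x) ->
  exists z, S z /\ forall x, In x xs -> le x z.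
Proof.
  intros [[x0 Sx0] HS]. induction xs as [|x xs IH]; intros H.
  - exists x0. split; [exact Sx0|intros x []].
  - destruct IH as [z [Sz Hz]]; [intros; apply H; right; auto|].
    destruct (HS x z (H x (or_introl eq_refl)) Sz) as [w [Sw [Hxw Hzw]]].
    exists w. split; [exact Sw|]. intros y [<-|Hy]; [exact Hxw|]. eapply le_trans; eauto.
Qed.

Lemma directed_chain (c : nat -> D) : (forall n, le (c n) (c (S n))) ->
  directed D le (fun y => exists n, y = c n).
Proof.
  intro Hc. assert (Hm : forall n m, n <= m -> le (c n) (c m)).
  { induction 1; [apply le_refl|eapply le_trans; eauto]. }
  split.
  - exists (c 0). eauto.
  - intros y1 y2 [n1 ->] [n2 ->]. exists (c (max n1 n2)). split; [eauto|].
    split; apply Hm; lia.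
Qed.

Lemma directed_image f S : (forall x y, le x y -> le (f x) (f y)) -> directed D le S ->
  directed D le (fun y => exists x, S x /\ y = f x).
Proof.
  intros Hf [[x0 Sx0] HS]. split.
  - exists (f x0). eauto.
  - intros y1 y2 [x1 [S1 ->]] [x2 [S2 ->]].
    destruct (HS x1 x2 S1 S2) as [z [Sz [H1 H2]]]. exists (f z). split; eauto.
Qed.

Lemma scott_closed_down C x y : scott_closed D le C -> C y -> le x y -> C x.
Proof.
  intros HC Cy Hxy. apply NNPP. intro Cx.
  destruct (proj1 (HC x) Cx) as [k [Hk [Ck Hkx]]].
  apply (proj2 (HC y)); [|exact Cy]. exists k. split; [exact Hk|]. split; [exact Ck|].
  eapply le_trans; eauto.
Qed.

Lemma scott_closed_sup C S s : scott_closed D le C -> directed D le S ->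
  is_lub D le S s -> (forall x, S x -> C x) -> C s.
Proof.
  intros HC HS Hs HSC. apply NNPP. intro Cs.
  destruct (proj1 (HC s) Cs) as [k [Hk [Ck Hks]]].
  destruct (Hk S s HS Hs Hks) as [x [Sx Hkx]].
  apply Ck. eapply scott_closed_down; eauto.
Qed.

Lemma scott_closed_principal y : scott_closed D le (fun z => le z y).
Proof.
  intro x. split.
  - intro Hxy. destruct (not_le_compact x y Hxy) as [k [Hk [Hkx Hky]]]. eauto.
  - intros [k [_ [Hky Hkx]]] Hxy. apply Hky. eapply le_trans; eauto.
Qed.

Lemma scott_closed_not_above k : compact D le k -> scott_closed D le (fun z => ~ le k z).
Proof.
  intros Hk x. split.
  - intro Hkx. apply NNPP in Hkx. exists k. split; [exact Hk|].
    split; [intro H; apply H, le_refl|exact Hkx].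
  - intros [k' [_ [Hkk' Hk'x]]] Hkx. apply NNPP in Hkk'. apply Hkx. eapply le_trans; eauto.
Qed.

Lemma continuous_mono f x y : scott_continuous D le f -> le x y -> le (f x) (f y).
Proof. intro Hf. apply Hf. Qed.

Lemma scott_closed_preimage f C : scott_continuous D le f -> scott_closed D le C ->
  scott_closed D le (fun x => C (f x)).
Proof.
  intros Hf HC x. split.
  - intro Cfx. apply NNPP. intro Hno. apply Cfx.
    apply (scott_closed_sup C _ _ HC
      (directed_image f _ (fun _ _ => continuous_mono f _ _ Hf) (compacts_below_directed x))
      (proj2 Hf _ _ (compacts_below_directed x) (compacts_below_lub x))).
    intros y [k [[Hk Hkx] ->]]. apply NNPP. intro Cfk. apply Hno. eauto.
  - intros [k [_ [Cfk Hkx]]] Cfx. apply Cfk.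
    eapply scott_closed_down; [exact HC|exact Cfx|]. apply continuous_mono; auto.
Qed.

Lemma scott_closure_sub A x : A x -> scott_closure D le A x.
Proof. intros Ax C _ HAC. auto. Qed.

Lemma scott_closure_least A C : scott_closed D le C -> (forall x, A x -> C x) ->
  forall x, scott_closure D le A x -> C x.
Proof. intros HC HAC x Hx. apply Hx; auto. Qed.

Lemma scott_closed_closure A : scott_closed D le (scott_closure D le A).
Proof.
  intro x. split.
  - intro Hx. apply not_all_ex_not in Hx. destruct Hx as [C HC].
    apply imply_to_and in HC. destruct HC as [HCc HC].
    apply imply_to_and in HC. destruct HC as [HAC Cx].
    destruct (proj1 (HCc x) Cx) as [k [Hk [Ck Hkx]]].
    exists k. split; [exact Hk|]. split; [|exact Hkx]. intro Hk'. apply Ck. apply Hk'; auto.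
  - intros [k [_ [Hk Hkx]]] Hx. apply Hk. intros C HC HAC.
    eapply scott_closed_down; [exact HC| |exact Hkx]. apply Hx; auto.
Qed.

Lemma scott_closure_mono (A B : D -> Prop) : (forall x, A x -> B x) ->
  forall x, scott_closure D le A x -> scott_closure D le B x.
Proof.
  intro HAB. apply scott_closure_least; [apply scott_closed_closure|].
  intros x Ax. apply scott_closure_sub. auto.
Qed.

Lemma scott_closure_down A x y : scott_closure D le A y -> le x y -> scott_closure D le A x.
Proof. intros. eapply scott_closed_down; eauto using scott_closed_closure. Qed.

Lemma lawson_closed_inter A B : lawson_closed D le A -> lawson_closed D le B ->
  lawson_closed D le (fun z => A z /\ B z).
Proof.
  intros HA HB x Hx. destruct (classic (A x)) as [Ax|Ax].
  - assert (Bx : ~ B x) by tauto.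
    destruct (HB x Bx) as [l [Hl1 [Hl2 Hl3]]]. exists l. split; [exact Hl1|].
    split; [exact Hl2|]. intros y Hy [_ By]. exact (Hl3 y Hy By).
  - destruct (HA x Ax) as [l [Hl1 [Hl2 Hl3]]]. exists l. split; [exact Hl1|].
    split; [exact Hl2|]. intros y Hy [Ay _]. exact (Hl3 y Hy Ay).
Qed.

Lemma lawson_closed_Inter {I : Type} (Q : I -> Prop) (F : I -> D -> Prop) :
  (forall i, Q i -> lawson_closed D le (F i)) ->
  lawson_closed D le (fun z => forall i, Q i -> F i z).
Proof.
  intros HF x Hx. apply not_all_ex_not in Hx. destruct Hx as [i Hi].
  apply imply_to_and in Hi. destruct Hi as [Qi Fix].
  destruct (HF i Qi x Fix) as [l [Hl1 [Hl2 Hl3]]]. exists l. split; [exact Hl1|].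
  split; [exact Hl2|]. intros y Hy H. apply (Hl3 y Hy). auto.
Qed.

Lemma mub_in_closure F m : mub D le F m -> mub_closure D le F m.
Proof. intros Hm C HF HC. exact (HC F m HF Hm). Qed.

Lemma exists_compact_below x : exists k, compact D le k /\ le k x.
Proof. destruct (compacts_below_directed x) as [[k Hk] _]. eauto. Qed.

Lemma scott_closed_empty : scott_closed D le (fun _ => False).
Proof.
  intro x. split; [intros _|intros [k [_ [Hk _]]]; exact Hk].
  destruct (exists_compact_below x) as [k [Hk Hkx]]. eauto.
Qed.

Lemma solution_least Act phi : initial_solution Act D le phi -> exists b, forall x, le b x.
Proof.
  intro Hsol.
  destruct (initial_solution_onto Act D le phi Hsol (fun _ => ((fun _ => False), (fun _ => True))))
    as [b Hb].
  - intro a. split; [exact scott_closed_empty|]. split; [intros x Hx; exfalso; exact (Hx I)|].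
    split; [intros ? ? ? ?; exact I|]. intro x. split; [intros []|intros [y [[] _]]].
  - exists b. intro x. apply (proj1 (proj2 (proj2 (proj2 Hsol)))). intro a. rewrite Hb.
    split; [intros z []|intros z _; exact I].
Qed.

Lemma solution_no_top Act phi (a0 : Act) : initial_solution Act D le phi ->
  forall x, exists k, compact D le k /\ ~ le k x.
Proof.
  (* A top element x lies above the preimages of (D, D) and (∅, ∅) under φ, so its lower set
     at a0 is D while its upper set is empty, contradicting L = ↓(L ∩ U). *)
  intros Hsol x. apply NNPP. intro Hno.
  assert (Htop : forall z, le z x).
  { intro z. apply le_of_compacts_below. intros k Hk _. apply NNPP. intro Hkx. eauto. }
  assert (Hemb := proj1 (proj2 (proj2 (proj2 Hsol)))).
  destruct (initial_solution_onto Act D le phi Hsol (fun _ => ((fun _ => True), (fun _ => True))))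
    as [z1 Hz1].
  { intro a. split.
    { intro y. split; [intro H; exfalso; exact (H I)|intros [k [_ [H _]]]; exact H]. }
    split; [intros y H; exfalso; exact (H I)|]. split; [intros ? ? ? ?; exact I|].
    intro y. split; [intros _|intros _; exact I].
    exists y. split; [exact I|]. split; [exact I|apply le_refl]. }
  destruct (initial_solution_onto Act D le phi Hsol (fun _ => ((fun _ => False), (fun _ => False))))
    as [z2 Hz2].
  { intro a. split; [exact scott_closed_empty|].
    split; [intros y _; exists []; split; [intros _ []|]; split; [intros _ []|auto]|].
    split; [intros y z []|]. intro y. split; [intros []|intros [w [[] _]]]. }
  destruct (proj1 (Hemb z1 x) (Htop z1) a0) as [Hx_full _].
  destruct (proj1 (Hemb z2 x) (Htop z2) a0) as [_ Hx_empty].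
  rewrite Hz1 in Hx_full. rewrite Hz2 in Hx_empty. simpl in *.
  destruct (proj2 (proj2 (proj2 (proj1 (proj2 (proj2 Hsol)) x a0))) x) as [Hspec _].
  destruct (Hspec (Hx_full x I)) as [y [_ [Uy _]]]. exact (Hx_empty y Uy).
Qed.

Section Pointed.
Variable bot : D.
Hypothesis bot_least : forall x, le bot x.

Lemma bot_compact : compact D le bot.
Proof. intros S s [[x Sx] _] _ _. exists x. auto. Qed.

Lemma lawson_closed_up c : lawson_closed D le (fun z => le c z).
Proof.
  intros x Hcx. destruct (not_le_compact c x Hcx) as [k [Hk [Hkc Hkx]]].
  exists [(bot, k)]. split; [intros p [<-|[]]; split; [apply bot_compact|exact Hk]|].
  split; [intros p [<-|[]]; split; [apply bot_least|exact Hkx]|].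
  intros y Hy Hcy. apply (proj2 (Hy (bot, k) (or_introl eq_refl))). simpl.
  eapply le_trans; eauto.
Qed.

(** * Lawson compactness *)

Definition fip (F : (D -> Prop) -> Prop) : Prop :=
  forall l, (forall A, In A l -> F A) -> exists z, forall A, In A l -> A z.

Section MaximalFamily.
Variable M : (D -> Prop) -> Prop.
Hypothesis M_closed : forall A, M A -> lawson_closed D le A.
Hypothesis M_fip : fip M.
Hypothesis M_maximal : forall B, lawson_closed D le B ->
  (forall l, (forall A, In A l -> M A) -> exists z, B z /\ forall A, In A l -> A z) -> M B.

Lemma maximal_family_avoid B : lawson_closed D le B -> ~ M B ->
  exists l, (forall A, In A l -> M A) /\ forall z, (forall A, In A l -> A z) -> ~ B z.
Proof.
  intros HB HnB. apply NNPP. intro Hno. apply HnB. apply M_maximal; [exact HB|].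
  intros l Hl. apply NNPP. intro Hnz. apply Hno. exists l. split; [exact Hl|].
  intros z Hz Bz. apply Hnz. eauto.
Qed.

Lemma maximal_family_up_antitone k k' :
  M (fun z => le k' z) -> le k k' -> M (fun z => le k z).
Proof.
  intros Hk' Hkk'. apply M_maximal; [apply lawson_closed_up|]. intros l Hl.
  destruct (M_fip ((fun z => le k' z) :: l)) as [z Hz]; [intros A [<-|HA]; auto|].
  exists z. split.
  - eapply le_trans; [exact Hkk'|]. apply (Hz _ (or_introl eq_refl)).
  - intros A HA. apply Hz. right. exact HA.
Qed.

Lemma maximal_family_up_bot : M (fun z => le bot z).
Proof.
  apply M_maximal; [apply lawson_closed_up|]. intros l Hl.
  destruct (M_fip l Hl) as [z Hz]. eauto.
Qed.

Lemma maximal_family_compacts_directed :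
  directed D le (fun k => compact D le k /\ M (fun z => le k z)).
Proof.
  split; [exists bot; split; [apply bot_compact|apply maximal_family_up_bot]|].
  intros k1 k2 [Hk1 M1] [Hk2 M2].
  destruct (proj2 le_bifinite [k1; k2]) as [Hmub [[ms Hms] Hcompact]];
    [intros x [<-|[<-|[]]]; assumption|].
  apply NNPP. intro Hno.
  destruct (finite_intersections_combine M
              (fun m z => mub D le [k1; k2] m -> ~ le m z) ms) as [G [HG HGavoid]].
  { intros m _. destruct (classic (mub D le [k1; k2] m)) as [Hm|Hm].
    - destruct (maximal_family_avoid _ (lawson_closed_up m)) as [l [Hl Hlavoid]].
      + intro HMm. apply Hno. exists m. split.
        * split; [apply Hcompact, mub_in_closure, Hm|exact HMm].
        * split; apply (proj1 Hm); simpl; auto.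
      + exists l. split; [exact Hl|]. intros z Hz _. exact (Hlavoid z Hz).
    - exists []. split; [intros _ []|]. intros z _ Hm'. contradiction. }
  destruct (M_fip ((fun z => le k1 z) :: (fun z => le k2 z) :: G)) as [z Hz];
    [intros A [<-|[<-|HA]]; auto|].
  destruct (Hmub z) as [m [Hm Hmz]].
  { intros x [<-|[<-|[]]]; [apply (Hz _ (or_introl eq_refl))|].
    apply (Hz _ (or_intror (or_introl eq_refl))). }
  refine (HGavoid z _ m (Hms m (mub_in_closure _ _ Hm)) Hm Hmz).
  intros A HA. apply Hz. right; right. exact HA.
Qed.

Lemma maximal_family_meet : exists x, forall A, M A -> A x.
Proof.
  (* The witness is the supremum of the compact k with ↑k ∈ M. *)
  set (K := fun k => compact D le k /\ M (fun z => le k z)).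
  destruct (dcpo_lub K maximal_family_compacts_directed) as [x Hx].
  exists x. intros A MA. apply NNPP. intro Ax.
  destruct (M_closed A MA x Ax) as [ps [Hps_compact [Hps_x Hps_avoid]]].
  destruct (finite_intersections_combine M
              (fun p z => le (fst p) z /\ ~ le (snd p) z) ps) as [G [HG HGbasic]].
  { intros [k l] Hp. destruct (Hps_compact _ Hp) as [Hk Hl]. destruct (Hps_x _ Hp) as [Hkx Hlx].
    simpl in *.
    destruct (Hk K x maximal_family_compacts_directed Hx Hkx) as [k' [[_ Mk'] Hkk']].
    destruct (maximal_family_avoid _ (lawson_closed_up l)) as [Gl [HGl HGlavoid]].
    { intro Ml. apply Hlx. apply (proj1 Hx). split; assumption. }
    exists ((fun z => le k z) :: Gl). split.
    - intros B [<-|HB]; [eapply maximal_family_up_antitone; eauto|auto].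
    - intros z Hz. split; [apply (Hz _ (or_introl eq_refl))|].
      apply HGlavoid. intros B HB. apply Hz. right. exact HB. }
  destruct (M_fip (A :: G)) as [z Hz]; [intros B [<-|HB]; auto|].
  apply (Hps_avoid z); [|apply (Hz _ (or_introl eq_refl))].
  intros p Hp. apply HGbasic; [|exact Hp]. intros B HB. apply Hz. right. exact HB.
Qed.

End MaximalFamily.

Theorem lawson_compact (F : (D -> Prop) -> Prop) :
  (forall A, F A -> lawson_closed D le A) -> fip F -> exists z, forall A, F A -> A z.
Proof.
  intros F_closed F_fip.
  (* Zorn is applied to the extensions G of F: the union of the empty chain must satisfy P. *)
  set (P := fun G : (D -> Prop) -> Prop =>
              (forall A, F A \/ G A -> lawson_closed D le A) /\ fip (fun A => F A \/ G A)).
  destruct (@classical_sets.Zorn_bigcup _ P) as [G [[G_closed G_fip] G_max]].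
  { intros C HCP HC. split.
    - intros A [FA|[H CH HA]]; [auto|]. apply (proj1 (HCP H CH)). auto.
    - intros l Hl. destruct (list_in_chain_union F C l HC Hl) as [HlF|[H [CH HlH]]].
      + destruct (F_fip l HlF) as [z Hz]. eauto.
      + exact (proj2 (HCP H CH) l HlH). }
  destruct (maximal_family_meet (fun A => F A \/ G A) G_closed G_fip) as [z Hz].
  - intros B HB Hmeet. apply NNPP. intro HnB. apply (G_max (fun A => G A \/ A = B)).
    + split; [intros A HA; left; exact HA|]. intro Hsub.
      apply HnB. right. apply Hsub. right. reflexivity.
    + split; [intros A [FA|[GA| ->]]; auto|].
      intros l Hl. destruct (list_split_off (fun A => F A \/ G A) B l) as [l' [Hl' Hcov]].
      { intros A HA. destruct (Hl A HA) as [FA|[GA|EA]]; auto. }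
      destruct (Hmeet l' Hl') as [z [Bz Hz]]. exists z. intros A HA.
      destruct (Hcov A HA) as [HA'|EA]; [apply Hz; exact HA'|subst A; exact Bz].
  - exists z. intros A FA. apply Hz. left. exact FA.
Qed.

Corollary lawson_compact_indexed {I : Type} (A0 : D -> Prop) (Q : I -> Prop)
  (F : I -> D -> Prop) :
  lawson_closed D le A0 -> (forall i, Q i -> lawson_closed D le (F i)) ->
  (forall is, (forall i, In i is -> Q i) -> exists z, A0 z /\ forall i, In i is -> F i z) ->
  exists z, A0 z /\ forall i, Q i -> F i z.
Proof.
  intros HA0 HF Hfin.
  destruct (lawson_compact (fun B => B = A0 \/ exists i, Q i /\ B = F i)) as [z Hz].
  - intros B [-> |[i [Qi ->]]]; auto.
  - intros l Hl. destruct (list_indices A0 Q F l Hl) as [is [His Hcov]].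
    destruct (Hfin is His) as [z [A0z Hz]]. exists z. intros B HB.
    destruct (Hcov B HB) as [-> |[i [Hi ->]]]; auto.
  - exists z. split; [apply Hz; left; reflexivity|]. intros i Qi. apply Hz. eauto.
Qed.

Lemma scott_closed_down_closure A : lawson_closed D le A ->
  scott_closed D le (fun x => exists y, A y /\ le x y).
Proof.
  intros HA x. split.
  - intro Hx. apply NNPP. intro Hno. apply Hx.
    destruct (lawson_compact_indexed A (fun k => compact D le k /\ le k x) (fun k z => le k z))
      as [y [Ay Hy]]; [exact HA|intros k _; apply lawson_closed_up| |].
    + intros ks Hks.
      destruct (directed_ub_list _ ks (compacts_below_directed x) Hks) as [k [[Hk Hkx] Hkk]].
      apply NNPP. intro Hnz. apply Hno. exists k. split; [exact Hk|]. split; [|exact Hkx].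
      intros [y [Ay Hky]]. apply Hnz. exists y. split; [exact Ay|].
      intros i Hi. eapply le_trans; eauto.
    + exists y. split; [exact Ay|]. apply le_of_compacts_below. intros k Hk Hkx. apply Hy. auto.
  - intros [k [_ [Hk Hkx]]] [y [Ay Hxy]]. apply Hk. exists y. split; [exact Ay|].
    eapply le_trans; eauto.
Qed.

Section NoTop.
(* The subbasic Lawson opens are the sets ↑k \ ↑l, none of which contains a top element. *)
Hypothesis no_top : forall x, exists k, compact D le k /\ ~ le k x.

Lemma lawson_closed_of_scott_closed C : scott_closed D le C -> lawson_closed D le C.
Proof.
  intros HC x Cx. destruct (proj1 (HC x) Cx) as [k [Hk [Ck Hkx]]].
  destruct (no_top x) as [l [Hl Hlx]].
  exists [(k, l)]. split; [intros p [<-|[]]; split; assumption|].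
  split; [intros p [<-|[]]; split; assumption|].
  intros y Hy Cy. apply Ck. eapply scott_closed_down; [exact HC|exact Cy|].
  exact (proj1 (Hy (k, l) (or_introl eq_refl))).
Qed.

Lemma lawson_closed_up_image f U : scott_continuous D le f -> lawson_closed D le U ->
  lawson_closed D le (fun y => exists u, U u /\ le (f u) y).
Proof.
  intros Hf HU y Hy.
  (* By compactness of U, finitely many compact k ≰ y lie below every point of f[U]. *)
  assert (Hks : exists ks, (forall k, In k ks -> compact D le k /\ ~ le k y) /\
                  forall u, U u -> exists k, In k ks /\ le k (f u)).
  { apply NNPP. intro Hno.
    destruct (lawson_compact_indexed U (fun k => compact D le k /\ ~ le k y)
                (fun k u => ~ le k (f u))) as [u [Uu Hu]]; [exact HU| | |].
    - intros k [Hk _]. apply lawson_closed_of_scott_closed.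
      apply (scott_closed_preimage f (fun z => ~ le k z) Hf). apply scott_closed_not_above; auto.
    - intros ks Hks. apply NNPP. intro Hnu. apply Hno. exists ks. split; [exact Hks|].
      intros u Uu. apply NNPP. intro Hnk. apply Hnu. exists u. split; [exact Uu|].
      intros k Hk Hkf. apply Hnk. eauto.
    - apply Hy. exists u. split; [exact Uu|]. apply le_of_compacts_below. intros k Hk Hku.
      apply NNPP. intro Hky. apply (Hu k); auto. }
  destruct Hks as [ks [Hks_compact Hks_cover]].
  exists (map (fun k => (bot, k)) ks). split; [|split].
  - intros p Hp. apply in_map_iff in Hp. destruct Hp as [k [<- Hk]].
    split; [apply bot_compact|apply Hks_compact; auto].
  - intros p Hp. apply in_map_iff in Hp. destruct Hp as [k [<- Hk]].
    split; [apply bot_least|apply Hks_compact; auto].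
  - intros z Hz [u [Uu Hfu]]. destruct (Hks_cover u Uu) as [k [Hk Hkf]].
    apply (proj2 (Hz (bot, k) (in_map _ _ _ Hk))). simpl. eapply le_trans; eauto.
Qed.

Lemma mixed_map_mixed f p : scott_continuous D le f -> is_mixed D le p ->
  is_mixed D le (mixed_map D le f p).
Proof.
  intros Hf [_ [HU [_ HL_spec]]]. simpl.
  set (U' := fun y => exists u, snd p u /\ le (f u) y).
  set (L' := scott_closure D le (fun y => exists x, fst p x /\ le y (f x))).
  assert (HU' : lawson_closed D le U') by (apply lawson_closed_up_image; assumption).
  split; [apply scott_closed_closure|]. split; [exact HU'|]. split.
  - intros y z [u [Uu Hu]] Hyz. exists u. split; [exact Uu|]. eapply le_trans; eauto.
  - intro z. split.
    + intro Hz. cut (exists y, (L' y /\ U' y) /\ le z y).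
      { intros [y [[Ly Uy] Hzy]]. eauto. }
      revert z Hz. apply scott_closure_least.
      * apply scott_closed_down_closure. apply lawson_closed_inter; [|exact HU'].
        apply lawson_closed_of_scott_closed, scott_closed_closure.
      * intros y [x [Lx Hyx]]. destruct (proj1 (HL_spec x) Lx) as [x' [Lx' [Ux' Hxx']]].
        exists (f x'). split; [split|].
        -- apply scott_closure_sub. exists x'. split; [exact Lx'|apply le_refl].
        -- exists x'. split; [exact Ux'|apply le_refl].
        -- eapply le_trans; [exact Hyx|]. apply continuous_mono; assumption.
    + intros [y [Ly [_ Hzy]]]. exact (scott_closure_down _ z y Ly Hzy).
Qed.

(** * The initial solution and its directed suprema *)

Section Solution.
Variables (Act : Type) (phi : D -> Act -> mixed_pair D).
Hypothesis Hsol : initial_solution Act D le phi.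

Definition L x a := fst (phi x a).
Definition U x a := snd (phi x a).

Lemma phi_onto (t : Act -> mixed_pair D) :
  (forall a, is_mixed D le (t a)) -> exists x, forall a, phi x a = t a.
Proof. apply initial_solution_onto, Hsol. Qed.

Lemma phi_mixed x a : is_mixed D le (phi x a).
Proof. apply Hsol. Qed.

Lemma le_iff_phi x y : le x y <->
  forall a, (forall z, L x a z -> L y a z) /\ (forall z, U y a z -> U x a z).
Proof. rewrite (proj1 (proj2 (proj2 (proj2 Hsol)))). reflexivity. Qed.

Lemma L_scott_closed x a : scott_closed D le (L x a).
Proof. apply phi_mixed. Qed.

Lemma U_lawson_closed x a : lawson_closed D le (U x a).
Proof. apply phi_mixed. Qed.

Lemma U_up x a y z : U x a y -> le y z -> U x a z.
Proof. apply phi_mixed. Qed.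

Lemma L_spec x a z : L x a z <-> exists y, L x a y /\ U x a y /\ le z y.
Proof. apply phi_mixed. Qed.

Lemma L_down x a y z : L x a y -> le z y -> L x a z.
Proof. intros. eapply scott_closed_down; eauto using L_scott_closed. Qed.

Definition sup_L (S : D -> Prop) a := scott_closure D le (fun y => exists x, S x /\ L x a y).
Definition sup_U (S : D -> Prop) a := fun y => forall x, S x -> U x a y.

Lemma sup_L_spec S a x0 : directed D le S -> S x0 ->
  forall z, sup_L S a z -> exists y, (sup_L S a y /\ U x0 a y) /\ le z y.
Proof.
  intros HS Sx0. apply scott_closure_least.
  - apply scott_closed_down_closure. apply lawson_closed_inter; [|apply U_lawson_closed].
    apply lawson_closed_of_scott_closed, scott_closed_closure.
  - intros z [x [Sx Lz]].
    destruct (proj2 HS x x0 Sx Sx0) as [x' [Sx' [Hxx' Hx0x']]].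
    destruct (proj1 (L_spec x' a z) (proj1 (proj1 (le_iff_phi x x') Hxx' a) z Lz))
      as [y [Ly [Uy Hzy]]].
    exists y. split; [split|exact Hzy].
    + apply scott_closure_sub. eauto.
    + exact (proj2 (proj1 (le_iff_phi x0 x') Hx0x' a) y Uy).
Qed.

Lemma sup_mixed S a : directed D le S -> is_mixed D le (sup_L S a, sup_U S a).
Proof.
  intro HS. split; [apply scott_closed_closure|]. simpl.
  split; [apply lawson_closed_Inter; intros; apply U_lawson_closed|].
  split; [intros y z Hy Hyz x Sx; eapply U_up; eauto|].
  intro z. split.
  - intro Hz.
    destruct (lawson_compact_indexed (fun y => sup_L S a y /\ le z y) S (fun x => U x a))
      as [y [[Ly Hzy] Uy]].
    + apply lawson_closed_inter; [|apply lawson_closed_up].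
      apply lawson_closed_of_scott_closed, scott_closed_closure.
    + intros; apply U_lawson_closed.
    + intros xs Hxs. destruct (directed_ub_list S xs HS Hxs) as [x [Sx Hx]].
      destruct (sup_L_spec S a x HS Sx z Hz) as [y [[Ly Uy] Hzy]].
      exists y. split; [split; assumption|].
      intros i Hi. exact (proj2 (proj1 (le_iff_phi i x) (Hx i Hi) a) y Uy).
    + exists y. auto.
  - intros [y [Ly [_ Hzy]]]. exact (scott_closure_down _ z y Ly Hzy).
Qed.

Lemma phi_sup S s : directed D le S -> is_lub D le S s ->
  forall a, phi s a = (sup_L S a, sup_U S a).
Proof.
  intros HS Hs. destruct (phi_onto (fun a => (sup_L S a, sup_U S a))) as [w Hw].
  { intro a. apply sup_mixed, HS. }
  assert (Hub : upper_bound D le S w).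
  { intros x Sx. apply le_iff_phi. intro a. unfold L at 2, U at 1. rewrite Hw. split.
    - intros z Lz. apply scott_closure_sub. eauto.
    - intros z Uz. exact (Uz x Sx). }
  assert (Hws : le w s).
  { apply le_iff_phi. intro a. unfold L at 1, U at 2. rewrite Hw. split.
    - apply scott_closure_least; [apply L_scott_closed|]. intros y [x [Sx Ly]].
      exact (proj1 (proj1 (le_iff_phi x s) (proj1 Hs x Sx) a) y Ly).
    - intros z Uz x Sx. exact (proj2 (proj1 (le_iff_phi x s) (proj1 Hs x Sx) a) z Uz). }
  rewrite <- (le_antisym w s Hws (proj2 Hs w Hub)). exact Hw.
Qed.

(** * Approximations of the identity *)

(* For continuous f the required preimage exists since φ is onto; otherwise [lift f x] is junk. *)
Definition lift (f : D -> D) (x : D) : D :=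
  epsilon (inhabits x) (fun z => forall a, phi z a = mixed_map D le f (phi x a)).

Lemma phi_lift f x : scott_continuous D le f ->
  forall a, phi (lift f x) a = mixed_map D le f (phi x a).
Proof.
  intro Hf. apply (epsilon_spec (inhabits x) (fun z => forall a, phi z a = _)).
  apply phi_onto. intro a. apply mixed_map_mixed, phi_mixed. exact Hf.
Qed.

Lemma L_lift f x a : scott_continuous D le f ->
  L (lift f x) a = scott_closure D le (fun y => exists l, L x a l /\ le y (f l)).
Proof. intro Hf. unfold L. rewrite phi_lift; auto. Qed.

Lemma U_lift f x a : scott_continuous D le f ->
  U (lift f x) a = (fun y => exists u, U x a u /\ le (f u) y).
Proof. intro Hf. unfold U. rewrite phi_lift; auto. Qed.

Lemma lift_le_iff f x w : scott_continuous D le f ->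
  le (lift f x) w <-> forall a, (forall l, L x a l -> L w a (f l)) /\
                                (forall z, U w a z -> exists u, U x a u /\ le (f u) z).
Proof.
  intro Hf. rewrite le_iff_phi. split; intros H a; destruct (H a) as [HL HU];
    rewrite L_lift, U_lift in *; auto; split; auto.
  - intros l Ll. apply HL. apply scott_closure_sub. exists l. split; [exact Ll|apply le_refl].
  - apply scott_closure_least; [apply L_scott_closed|]. intros y [l [Ll Hyl]].
    exact (L_down w a _ y (HL l Ll) Hyl).
Qed.

Lemma lift_le f g x y : scott_continuous D le f -> scott_continuous D le g ->
  (forall z, le (f z) (g z)) -> le x y -> le (lift f x) (lift g y).
Proof.
  intros Hf Hg Hfg Hxy. apply lift_le_iff; [exact Hf|]. intro a.
  destruct (proj1 (le_iff_phi x y) Hxy a) as [HL HU]. rewrite L_lift, U_lift; [|exact Hg..].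
  split.
  - intros l Ll. apply (scott_closure_down _ _ (g l)); [|apply Hfg].
    apply scott_closure_sub. exists l. split; [auto|apply le_refl].
  - intros z [u [Uu Hgu]]. exists u. split; [auto|]. eapply le_trans; eauto.
Qed.

Lemma lift_below f x : scott_continuous D le f -> (forall z, le (f z) z) -> le (lift f x) x.
Proof.
  intros Hf Hfz. apply lift_le_iff; [exact Hf|]. intro a. split.
  - intros l Ll. exact (L_down x a l (f l) Ll (Hfz l)).
  - intros z Uz. exists z. auto.
Qed.

Lemma lift_le_of_images f x y : scott_continuous D le f ->
  (forall a l, L x a l -> exists l', L y a l' /\ f l' = f l) ->
  (forall a u, U y a u -> exists u', U x a u' /\ f u' = f u) ->
  le (lift f x) (lift f y).
Proof.
  intros Hf HL HU. apply lift_le_iff; [exact Hf|]. intro a.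
  rewrite L_lift, U_lift; [|exact Hf..]. split.
  - intros l Ll. destruct (HL a l Ll) as [l' [Ll' <-]].
    apply scott_closure_sub. exists l'. split; [exact Ll'|apply le_refl].
  - intros z [u [Uu Hfu]]. destruct (HU a u Uu) as [u' [Uu' Heq]].
    exists u'. split; [exact Uu'|]. rewrite Heq. exact Hfu.
Qed.

Lemma lift_sup_le f S s t : scott_continuous D le f -> directed D le S -> is_lub D le S s ->
  directed D le (fun y => exists x, S x /\ y = lift f x) ->
  is_lub D le (fun y => exists x, S x /\ y = lift f x) t -> le (lift f s) t.
Proof.
  intros Hf HS Hs HT Ht. apply lift_le_iff; [exact Hf|]. intro a.
  unfold L at 1 2, U at 1 2. rewrite (phi_sup S s HS Hs a), (phi_sup _ t HT Ht a). simpl.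
  split.
  - apply scott_closure_least.
    { apply scott_closed_preimage; [exact Hf|apply scott_closed_closure]. }
    intros l [x [Sx Ll]]. apply scott_closure_sub. exists (lift f x). split; [eauto|].
    rewrite L_lift; [|exact Hf]. apply scott_closure_sub. exists l. split; [exact Ll|apply le_refl].
  - intros z Hz.
    destruct (lawson_compact_indexed (fun u => le (f u) z) S (fun x => U x a)) as [u [Hfu Uu]].
    + apply lawson_closed_of_scott_closed.
      apply (scott_closed_preimage f (fun y => le y z) Hf), scott_closed_principal.
    + intros; apply U_lawson_closed.
    + intros xs Hxs. destruct (directed_ub_list S xs HS Hxs) as [x [Sx Hx]].
      assert (Hzx := Hz (lift f x) (ex_intro _ x (conj Sx eq_refl))).
      rewrite U_lift in Hzx; [|exact Hf]. destruct Hzx as [u [Uu Hfu]].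
      exists u. split; [exact Hfu|].
      intros i Hi. exact (proj2 (proj1 (le_iff_phi i x) (Hx i Hi) a) u Uu).
    + exists u. split; [exact Uu|exact Hfu].
Qed.

Lemma lift_continuous f : scott_continuous D le f -> scott_continuous D le (lift f).
Proof.
  intro Hf.
  assert (Hmono : forall x y, le x y -> le (lift f x) (lift f y))
    by (intros; apply lift_le; auto using le_refl).
  split; [exact Hmono|]. intros S s HS Hs.
  assert (HT := directed_image (lift f) S Hmono HS).
  destruct (dcpo_lub _ HT) as [t Ht].
  assert (Hts : le t (lift f s)).
  { apply (proj2 Ht). intros y [x [Sx ->]]. apply Hmono, (proj1 Hs), Sx. }
  rewrite <- (le_antisym t (lift f s) Hts (lift_sup_le f S s t Hf HS Hs HT Ht)). exact Ht.
Qed.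

Fixpoint approx (n : nat) : D -> D :=
  match n with
  | O => fun _ => bot
  | S n => lift (approx n)
  end.

Lemma approx_continuous n : scott_continuous D le (approx n).
Proof.
  induction n as [|n IH]; [|apply lift_continuous, IH].
  split; [intros; apply le_refl|]. intros S s [[x Sx] _] _. split.
  - intros y [x' [_ ->]]. apply le_refl.
  - intros u Hu. apply Hu. eauto.
Qed.

Lemma approx_le_succ n x : le (approx n x) (approx (S n) x).
Proof.
  revert x. induction n as [|n IH]; intro x; [apply bot_least|].
  apply lift_le; [apply approx_continuous|apply (approx_continuous (S n))|exact IH|apply le_refl].
Qed.

Lemma approx_mono n m x : n <= m -> le (approx n x) (approx m x).
Proof. induction 1; [apply le_refl|eapply le_trans; eauto using approx_le_succ]. Qed.

Lemma approx_below n x : le (approx n x) x.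
Proof.
  revert x. induction n as [|n IH]; intro x; [apply bot_least|].
  apply lift_below; auto using approx_continuous.
Qed.

Lemma approx_directed x : directed D le (fun y => exists n, y = approx n x).
Proof. apply directed_chain. intro n. apply approx_le_succ. Qed.

Definition approx_sup (x : D) : D :=
  epsilon (inhabits x) (is_lub D le (fun y => exists n, y = approx n x)).

Lemma approx_sup_lub x : is_lub D le (fun y => exists n, y = approx n x) (approx_sup x).
Proof. unfold approx_sup. apply (epsilon_spec (inhabits x)), dcpo_lub, approx_directed. Qed.

Lemma approx_le_sup n x : le (approx n x) (approx_sup x).
Proof. apply (proj1 (approx_sup_lub x)). eauto. Qed.

Lemma approx_sup_lub_succ x :
  is_lub D le (fun y => exists n, y = approx (S n) x) (approx_sup x).
Proof.
  split; [intros y [n ->]; apply approx_le_sup|].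
  intros u Hu. apply (proj2 (approx_sup_lub x)). intros y [n ->].
  eapply le_trans; [apply approx_le_succ|]. apply Hu. eauto.
Qed.

Lemma approx_sup_continuous : scott_continuous D le approx_sup.
Proof.
  assert (Hmono : forall x y, le x y -> le (approx_sup x) (approx_sup y)).
  { intros x y Hxy. apply (proj2 (approx_sup_lub x)). intros z [n ->].
    eapply le_trans; [|apply approx_le_sup].
    apply continuous_mono; [apply approx_continuous|exact Hxy]. }
  split; [exact Hmono|]. intros S s HS Hs. split.
  - intros y [x [Sx ->]]. apply Hmono, (proj1 Hs), Sx.
  - intros u Hu. apply (proj2 (approx_sup_lub s)). intros z [n ->].
    apply (proj2 (proj2 (approx_continuous n) S s HS Hs)).
    intros y [x [Sx ->]]. eapply le_trans; [apply approx_le_sup|]. apply Hu. eauto.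
Qed.

Lemma approx_succ_directed x : directed D le (fun y => exists n, y = approx (S n) x).
Proof. apply (directed_chain (fun n => approx (S n) x)). intro n. apply approx_le_succ. Qed.

Lemma L_approx_sup x a y : L (approx_sup x) a y <->
  scott_closure D le (fun y => exists l, L x a l /\ le y (approx_sup l)) y.
Proof.
  unfold L at 1. rewrite (phi_sup _ _ (approx_succ_directed x) (approx_sup_lub_succ x) a). simpl.
  revert y. split; apply scott_closure_least; try apply scott_closed_closure.
  - intros z [w [[n ->] Lz]]. change (L (lift (approx n) x) a z) in Lz.
    rewrite L_lift in Lz; [|apply approx_continuous].
    revert z Lz. apply scott_closure_mono. intros z [l [Ll Hzl]].
    exists l. split; [exact Ll|]. eapply le_trans; [exact Hzl|apply approx_le_sup].
  - intros z [l [Ll Hzl]]. apply (scott_closure_down _ _ (approx_sup l)); [|exact Hzl].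
    apply (scott_closed_sup _ _ _ (scott_closed_closure _) (approx_directed l) (approx_sup_lub l)).
    intros w [n ->]. apply scott_closure_sub.
    exists (approx (S n) x). split; [exists n; reflexivity|].
    change (L (lift (approx n) x) a (approx n l)). rewrite L_lift; [|apply approx_continuous].
    apply scott_closure_sub. exists l. split; [exact Ll|apply le_refl].
Qed.

Lemma U_approx_sup x a y : U (approx_sup x) a y <-> exists u, U x a u /\ le (approx_sup u) y.
Proof.
  unfold U at 1. rewrite (phi_sup _ _ (approx_succ_directed x) (approx_sup_lub_succ x) a). simpl.
  unfold sup_U. split.
  - intro Hy.
    destruct (lawson_compact_indexed (U x a) (fun _ : nat => True) (fun n u => le (approx n u) y))
      as [u [Uu Hu]]; [apply U_lawson_closed| | |].
    + intros n _. apply lawson_closed_of_scott_closed.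
      apply (scott_closed_preimage _ (fun z => le z y)); [apply approx_continuous|].
      apply scott_closed_principal.
    + intros ns _. destruct (list_nat_bound ns) as [N HN].
      assert (HyN := Hy (approx (S N) x) (ex_intro _ N eq_refl)).
      change (U (lift (approx N) x) a y) in HyN. rewrite U_lift in HyN; [|apply approx_continuous].
      destruct HyN as [u [Uu Hu]]. exists u. split; [exact Uu|]. intros n Hn.
      eapply le_trans; [|exact Hu]. apply approx_mono. auto.
    + exists u. split; [exact Uu|]. apply (proj2 (approx_sup_lub u)). intros z [n ->]. auto.
  - intros [u [Uu Hu]] w [n ->]. change (U (lift (approx n) x) a y).
    rewrite U_lift; [|apply approx_continuous].
    exists u. split; [exact Uu|]. eapply le_trans; [apply approx_le_sup|exact Hu].
Qed.

Lemma le_approx_sup x : le x (approx_sup x).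
Proof.
  (* minimal invariance *)
  apply (proj2 (proj2 (proj2 (proj2 (proj2 Hsol))))); [apply approx_sup_continuous|].
  intros y a. split; intro z; [apply L_approx_sup|apply U_approx_sup].
Qed.

(** * Characteristic formulas *)

Lemma sat_mono f x z : le x z ->
  (sat phi ModeA x f -> sat phi ModeA z f) /\ (sat phi ModeC z f -> sat phi ModeC x f).
Proof.
  revert x z. induction f as [|g IH|b g IH|g IHg h IHh]; intros x z Hxz; simpl.
  - split; auto.
  - destruct (IH x z Hxz) as [IHa IHc]. split; intros Hn Hg; apply Hn; auto.
  - destruct (proj1 (le_iff_phi x z) Hxz b) as [HL HU].
    split; intros [d' [Hd' Hg]]; exists d'; split; auto; [apply HL|apply HU]; exact Hd'.
  - destruct (IHg x z Hxz), (IHh x z Hxz). split; intros [Hg Hh]; split; auto.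
Qed.

Lemma sat_a_sat_c f x : sat phi ModeA x f -> sat phi ModeC x f.
Proof.
  revert x. induction f as [|g IH|b g IH|g IHg h IHh]; intro x; simpl.
  - auto.
  - intros Hn Hg. apply Hn, IH, Hg.
  - intros [d' [Ld' Hg]]. destruct (proj1 (L_spec x b d') Ld') as [y [_ [Uy Hd'y]]].
    exists y. split; [exact Uy|]. apply IH, (proj1 (sat_mono g d' y Hd'y)), Hg.
  - intros [H1 H2]. split; auto.
Qed.

Lemma sat_and_list {X : Type} m (xs : list X) (R : X -> D -> Prop) :
  (forall x, In x xs -> exists f, forall w, sat phi m w f <-> R x w) ->
  exists f, forall w, sat phi m w f <-> forall x, In x xs -> R x w.
Proof.
  induction xs as [|x xs IH]; intro H.
  - exists HTrue. intro w. simpl. split; [intros _ _ []|auto].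
  - destruct IH as [f Hf]; [intros; apply H; right; auto|].
    destruct (H x (or_introl eq_refl)) as [g Hg].
    exists (HAnd g f). intro w. simpl. rewrite Hg, Hf. split.
    + intros [Hx Hxs] y [<-|Hy]; auto.
    + intro Hall. split; auto.
Qed.

Lemma sat_guard m (P : Prop) (R : D -> Prop) :
  (P -> exists f, forall w, sat phi m w f <-> R w) ->
  exists f, forall w, sat phi m w f <-> (P -> R w).
Proof.
  intro H. destruct (classic P) as [HP|HnP].
  - destruct (H HP) as [f Hf]. exists f. intro w. rewrite Hf. tauto.
  - exists HTrue. intro w. simpl. tauto.
Qed.

Hypothesis Act_finite : finite_type Act.

Lemma approx_finite_image n : exists l, forall x, In (approx n x) l.
Proof.
  induction n as [|n [ln Hln]]; [exists [bot]; intro x; left; reflexivity|].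
  destruct Act_finite as [la Hla].
  (* approx (S n) x only depends on which values of approx n are taken on L x a and U x a. *)
  set (image_test := fun x (c : Act * D * bool) =>
         let '(a, e, lower) := c in
         if lower then exists l, L x a l /\ approx n l = e
         else exists u, U x a u /\ approx n u = e).
  apply (finite_image_of_finite_tests (approx (S n)) image_test
           (list_prod (list_prod la ln) [true; false])).
  intros x y Hxy.
  assert (Htest : forall a l b,
             image_test x (a, approx n l, b) <-> image_test y (a, approx n l, b)).
  { intros a l b. apply Hxy. apply in_prod; [apply in_prod; auto|destruct b; simpl; auto]. }
  apply le_antisym; apply lift_le_of_images; try apply approx_continuous; intros a l Hl.
  - exact (proj1 (Htest a l true) (ex_intro _ l (conj Hl eq_refl))).
  - exact (proj2 (Htest a l false) (ex_intro _ l (conj Hl eq_refl))).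
  - exact (proj2 (Htest a l true) (ex_intro _ l (conj Hl eq_refl))).
  - exact (proj1 (Htest a l false) (ex_intro _ l (conj Hl eq_refl))).
Qed.

Lemma sat_dia_L a e chi : (forall w, sat phi ModeA w chi <-> le e w) ->
  forall w, sat phi ModeA w (HDia a chi) <-> L w a e.
Proof.
  intros Hchi w. simpl. split.
  - intros [d' [Ld' Hd']]. exact (L_down w a d' e Ld' (proj1 (Hchi d') Hd')).
  - intro Le. exists e. split; [exact Le|]. apply Hchi, le_refl.
Qed.

Lemma formula_L_approx n a x :
  (forall y, exists f, forall w, sat phi ModeA w f <-> le (approx n y) w) ->
  exists f, forall w, sat phi ModeA w f <-> forall l, L x a l -> L w a (approx n l).
Proof.
  intro IH. destruct (approx_finite_image n) as [ln Hln].
  destruct (sat_and_list ModeA ln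
              (fun e w => (exists l, L x a l /\ approx n l = e) -> L w a e)) as [f Hf].
  { intros e _. apply sat_guard. intros [l [_ <-]]. destruct (IH l) as [g Hg].
    exists (HDia a g). apply sat_dia_L, Hg. }
  exists f. intro w. rewrite Hf. split.
  - intros H l Ll. apply (H _ (Hln l)). eauto.
  - intros H e _ [l [Ll <-]]. auto.
Qed.

Lemma formula_U_approx n a x :
  (forall y, exists f, forall w, sat phi ModeA w f <-> le (approx n y) w) ->
  exists f, forall w, sat phi ModeA w f <->
    forall z, U w a z -> exists u, U x a u /\ le (approx n u) z.
Proof.
  intro IH. destruct (approx_finite_image n) as [ln Hln].
  destruct (sat_and_list ModeC ln
              (fun e z => (exists u, U x a u /\ approx n u = e) -> ~ le e z)) as [f Hf].
  { intros e _. apply sat_guard. intros [u [_ <-]]. destruct (IH u) as [g Hg].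
    exists (HNeg g). intro z. simpl. rewrite Hg. reflexivity. }
  exists (HNeg (HDia a f)). intro w. simpl. split.
  - intros Hn z Uz. apply NNPP. intro Hno. apply Hn. exists z. split; [exact Uz|].
    apply Hf. intros e _ [u [Uu <-]] Hle. apply Hno. eauto.
  - intros H [z [Uz Hz]]. destruct (H z Uz) as [u [Uu Hu]].
    exact (proj1 (Hf z) Hz _ (Hln u) (ex_intro _ u (conj Uu eq_refl)) Hu).
Qed.

Lemma approx_characteristic n x :
  exists f, forall w, sat phi ModeA w f <-> le (approx n x) w.
Proof.
  revert x. induction n as [|n IH]; intro x.
  - exists HTrue. intro w. simpl. split; [intros _; apply bot_least|auto].
  - destruct Act_finite as [la Hla].
    destruct (sat_and_list ModeA la
      (fun a w => (forall l, L x a l -> L w a (approx n l)) /\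
                  (forall z, U w a z -> exists u, U x a u /\ le (approx n u) z))) as [f Hf].
    { intros a _. destruct (formula_L_approx n a x IH) as [fL HfL].
      destruct (formula_U_approx n a x IH) as [fU HfU].
      exists (HAnd fL fU). intro w. simpl. rewrite HfL, HfU. reflexivity. }
    exists f. intro w. rewrite Hf. simpl. rewrite lift_le_iff; [|apply approx_continuous].
    split; auto.
Qed.

Theorem maximal_of_sat_c_sat_a d :
  (forall f, sat phi ModeC d f -> sat phi ModeA d f) -> maximal le d.
Proof.
  intros Hd y Hdy.
  assert (Happrox : forall n, le (approx n y) d).
  { intro n. destruct (approx_characteristic n y) as [f Hf]. apply Hf, Hd.
    apply (proj2 (sat_mono f d y Hdy)), sat_a_sat_c, Hf, approx_below. }
  apply le_antisym; [|exact Hdy].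
  eapply le_trans; [apply le_approx_sup|]. apply (proj2 (approx_sup_lub y)).
  intros z [n ->]. apply Happrox.
Qed.

End Solution.
End NoTop.
End Pointed.
End DomainTheory.

Lemma le_of_no_actions Act D le (phi : D -> Act -> mixed_pair D) :
  initial_solution Act D le phi -> ~ inhabited Act -> forall x y, le x y.
Proof.
  intros Hsol HAct x y. apply (proj1 (proj2 (proj2 (proj2 Hsol)))).
  intro a. exfalso. apply HAct. constructor. exact a.
Qed.

Theorem lemma3p13 (Act : Type) (HAct : finite_type Act)
  (D : Type) (le : D -> D -> Prop) (phi : D -> Act -> mixed_pair D)
  (Hsol : initial_solution Act D le phi) (d : D) :
  (forall f : hml Act, sat phi ModeC d f -> sat phi ModeA d f) ->
  maximal le d.
Proof.
  intro Hd.
  assert (le_po : is_partial_order D le) by apply Hsol.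
  assert (le_bifinite : is_bifinite D le) by apply Hsol.
  destruct (classic (inhabited Act)) as [[a0]|Hempty].
  - destruct (solution_least D le le_bifinite Act phi Hsol) as [bot bot_least].
    exact (maximal_of_sat_c_sat_a D le le_po le_bifinite bot bot_least
             (solution_no_top D le le_po le_bifinite Act phi a0 Hsol) Act phi Hsol HAct d Hd).
  - intros y _. apply (le_antisym D le le_po); apply (le_of_no_actions Act D le phi Hsol Hempty).
Qed.
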